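(* In the setting of the context, suppose Condition I holds ($ZR^i\in L^1$ for all $i$ and all $Z\in\mathcal{Q}$), and let $\tilde{\mathcal{Q}}\subset\mathcal{Q}$ satisfy Conditions POS and INT. If $1\in\tilde{\mathcal{Q}}$, then $\rho$ is strictly expectation bounded (i.e. $\rho(X)>\mathbb{E}[-X]$ for every non-constant $X\in L$) and $\Pi^\rho_0=\{\mathbf{0}\}$. If in addition $\rho_1<\infty$, then for all $\nu\ge0$ the set $\Pi^\rho_\nu$ is nonempty, compact and convex.
   Context: Let $(\Omega,\mathcal{F},\mathbb{P})$ be a probability space and a market: riskless asset $S^0_0=1$, $S^0_1=1+r$, $r>-1$; risky assets $S^1,\dots,S^d$ with constants $S^i_0>0$ and real-valued $\mathcal{F}$-measurable $S^i_1$; returns $R^i:=(S^i_1-S^i_0)/S^i_0$. Standing assumptions: nonredundancy (if $\theta\in\mathbb{R}^{1+d}$ with $\sum_{i=0}^d\theta^iS^i_t=0$ a.s. for $t\in\{0,1\}$ then $\theta=0$), $R^i\in L^1$, $\mathbb{E}[R^i]\ne r$ for some $i$. Excess return: $X_\pi:=\pi\cdot(R-r\mathbf{1})$; $\Pi_\nu:=\{\pi:\mathbb{E}[X_\pi]=\nu\}$. $L$ is a Riesz space with $L^\infty\subset L\subset L^1$ containing all $X_\pi$. $\mathcal{D}:=\{Z\in L^1:Z\ge0,\mathbb{E}[Z]=1\}$; $\mathcal{Q}\subset\mathcal{D}$ is convex with $1\in\mathcal{Q}$ and $\rho(X)=\sup_{Z\in\mathcal{Q}}\mathbb{E}[-ZX]$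 on $L$, with $\mathbb{E}[-ZX]:=\mathbb{E}[ZX^-]-\mathbb{E}[ZX^+]$ and $\mathbb{E}[-ZX]=\infty$ if $\mathbb{E}[ZX^-]=\infty$. $\rho_\nu:=\inf\{\rho(X_\pi):\pi\in\Pi_\nu\}$; $\Pi^\rho_\nu$ is the set of $\pi\in\Pi_\nu$ with $\rho(X_\pi)<\infty$ and $\rho(X_\pi)\le\rho(X_{\pi'})$ for all $\pi'\in\Pi_\nu$. Condition POS for $\tilde{\mathcal{Q}}$: $\tilde Z>0$ a.s. for all $\tilde Z\in\tilde{\mathcal{Q}}$. Condition INT: for every $\tilde Z\in\tilde{\mathcal{Q}}$ there is an $L^\infty$-dense subset $\mathcal{E}$ of $\mathcal{D}\cap L^\infty$ such that for every $Z\in\mathcal{E}$ there is $\lambda\in(0,1)$ with $\lambda Z+(1-\lambda)\tilde Z\in\mathcal{Q}$. *)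

From HB Require Import structures.
From mathcomp Require Import all_boot all_order all_algebra.
From mathcomp Require Import all_classical all_reals all_analysis.
Set Implicit Arguments. Unset Strict Implicit. Unset Printing Implicit Defensive.
Import Order.TTheory GRing.Theory Num.Theory.
Import numFieldNormedType.Exports.
Local Open Scope classical_set_scope.
Local Open Scope ring_scope.

Section RiskMeasureDefs.
Context {d : measure_display} {T : measurableType d} {R : realType}
  (P : probability T R).

(** Random variables are represented by (measurable) functions T -> R; sets of
    equivalence classes (subsets of L^0) are represented by sets of functions
    that are saturated under a.s. equality. *)
Definition aeeq (f g : T -> R) : Prop := {ae P, forall x, f x = g x}.

Definition ae_saturated (A : set (T -> R)) : Prop :=
  forall f g, A f -> measurable_fun setT g -> aeeq f g -> A g.

Definition isL1 (f : T -> R) : Prop :=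
  measurable_fun setT f /\ P.-integrable setT (EFin \o f).

Definition isLinf (f : T -> R) : Prop :=
  measurable_fun setT f /\ exists c : R, {ae P, forall x, `|f x| <= c}.

Definition mean (X : T -> R) : \bar R := (\int[P]_x (X x)%:E)%E.

Definition riesz_between (L : set (T -> R)) : Prop :=
  ae_saturated L /\
  [/\ (forall f g, L f -> L g -> L (fun x => f x + g x)),
      (forall (a : R) f, L f -> L (fun x => a * f x)),
      (forall f g, L f -> L g -> L (fun x => Num.max (f x) (g x))),
      (forall f, isLinf f -> L f) &
      (forall f, L f -> isL1 f)].

Definition Dset (Z : T -> R) : Prop :=
  [/\ isL1 Z, {ae P, forall x, 0 <= Z x} & mean Z = 1%E].

Definition EnegZX (Z X : T -> R) : \bar R :=
  let a := (\int[P]_x (Z x * Num.max (- X x) 0)%:E)%E in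
  if a == +oo%E then +oo%E
  else (a - \int[P]_x (Z x * Num.max (X x) 0)%:E)%E.

Definition rho (Q : set (T -> R)) (X : T -> R) : \bar R :=
  ereal_sup [set EnegZX Z X | Z in Q].

Definition Q_admissible (Q : set (T -> R)) : Prop :=
  [/\ ae_saturated Q,
      (forall Z, Q Z -> Dset Z),
      (forall Z1 Z2 (l : R), Q Z1 -> Q Z2 -> 0 <= l <= 1 ->
          Q (fun x => l * Z1 x + (1 - l) * Z2 x)) &
      Q (cst 1)].

Definition strictly_expectation_bounded (L Q : set (T -> R)) : Prop :=
  forall X, L X -> ~ (exists c : R, aeeq X (cst c)) -> (- mean X < rho Q X)%E.

Definition cond_POS (Qt : set (T -> R)) : Prop :=
  forall Z, Qt Z -> {ae P, forall x, 0 < Z x}.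

Definition cond_INT (Q Qt : set (T -> R)) : Prop :=
  forall Zt, Qt Zt -> exists E : set (T -> R),
    [/\ (forall Z, E Z -> Dset Z /\ isLinf Z),
        (forall Z, Dset Z -> isLinf Z -> forall eps : R, 0 < eps ->
            exists2 Z', E Z' & {ae P, forall x, `|Z x - Z' x| <= eps}) &
        (forall Z, E Z -> exists2 l : R, 0 < l < 1 &
            Q (fun x => l * Z x + (1 - l) * Zt x))].

Section Market.
Variables (n : nat) (r : R) (S0 : 'I_n -> R) (S1 : 'I_n -> T -> R).

Definition Ret (i : 'I_n) (w : T) : R := (S1 i w - S0 i) / S0 i.

Definition market_assumptions : Prop :=
  -1 < r /\
  [/\ (forall i, 0 < S0 i),
      (forall i, measurable_fun setT (S1 i)),
      (forall (th0 : R) (th : 'rV[R]_n),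
          th0 * 1 + \sum_i th 0 i * S0 i = 0 ->
          {ae P, forall w, th0 * (1 + r) + \sum_i th 0 i * S1 i w = 0} ->
          th0 = 0 /\ th = 0),
      (forall i, isL1 (Ret i)) &
      (exists i, mean (Ret i) != r%:E)].

Definition Xpi (pi : 'rV[R]_n) (w : T) : R := \sum_i pi 0 i * (Ret i w - r).

Definition Pi_nu (nu : R) : set 'rV[R]_n := [set pi | mean (Xpi pi) = nu%:E].

Definition rho_nu (Q : set (T -> R)) (nu : R) : \bar R :=
  ereal_inf [set rho Q (Xpi pi) | pi in Pi_nu nu].

Definition Pi_rho (Q : set (T -> R)) (nu : R) : set 'rV[R]_n :=
  [set pi | [/\ Pi_nu nu pi, (rho Q (Xpi pi) < +oo)%E &
     forall pi', Pi_nu nu pi' -> (rho Q (Xpi pi) <= rho Q (Xpi pi'))%E]].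

Definition cond_I (Q : set (T -> R)) : Prop :=
  forall i Z, Q Z -> isL1 (fun w => Z w * Ret i w).

End Market.
End RiskMeasureDefs.

From HB Require Import structures.
From mathcomp Require Import all_boot all_order all_algebra.
From mathcomp Require Import all_classical all_reals all_analysis.
Import Order.TTheory GRing.Theory Num.Theory.
Import numFieldNormedType.Exports.
Local Open Scope classical_set_scope.
Local Open Scope ring_scope.
From mathcomp Require Import measurable_realfun finmap ring lra.
Set Implicit Arguments. Unset Strict Implicit. Unset Printing Implicit Defensive.

(* Write m := E[R - r] and C := {E[Z (R - r)] : Z in Q}.  Under Condition I,
   E[X_pi] = pi.m and rho(X_pi) = G(pi) := sup_{c in C} -pi.c, a lower
   semicontinuous sublinear function of pi.  For a nonconstant X, a bounded
   density Z with E[Z X] < E[X] is approximated, via INT at Zt = 1, by an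
   element of Q with the same property, so rho(X) > E[-X]; by nonredundancy
   X_u is nonconstant for u <> 0, hence G > 0 on the hyperplane pi.m = 0 minus
   the origin.  Compactness of the unit sphere of that hyperplane makes the
   sublevel sets of G on every hyperplane pi.m = nu bounded, so G attains its
   minimum there and the minimisers form a compact convex set. *)

Lemma ereal_dense (R : realType) (x y : \bar R) :
  (x < y)%E -> exists t : R, (x < t%:E < y)%E.
Proof.
case: x => [a| |] /=; case: y => [b| |] //= xy.
- by exists ((a + b) / 2); rewrite !lte_fin in xy *; apply/andP; split; lra.
- by exists (a + 1); rewrite lte_fin ltry andbT; lra.
- by exists (b - 1); rewrite ltNyr lte_fin; lra.
- by exists 0; rewrite ltNyr ltry.
Qed.

Lemma lower_semicontinuous_compact_min (R : realType) (X : topologicalType)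
    (f : X -> \bar R) (K : set X) :
  lower_semicontinuous f -> compact K -> K !=set0 ->
  exists2 p, K p & forall q, K q -> (f p <= f q)%E.
Proof.
move=> lsc_f cK [p0 Kp0].
(* A cluster point of the sublevel sets [K `&` [set x | f x <= t]], [t] above
   the infimum, is a minimiser. *)
have [[q0 [Kq0 fq0]]|all_infty] := pselect (exists q, K q /\ (f q < +oo)%E); last first.
  exists p0 => // q Kq; rewrite leNgt; apply/negP => fqp.
  by apply: all_infty; exists q; split => //; exact: lt_le_trans fqp (leey _).
pose D := [set t : R | exists2 q, K q & (f q < t%:E)%E].
pose B t := K `&` [set x | (f x <= t%:E)%E].
have filterB : ProperFilter (filter_from D B).
  apply: filter_from_proper => [|t [q Kq fqt]]; last by exists q; split => //; exact: ltW.
  apply: filter_from_filter => [|s t Ds Dt].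
    by have [t /andP[ft _]] := ereal_dense fq0; exists t, q0.
  exists (Num.min s t); first by rewrite /D /=; case: leP.
  by move=> x [Kx fx]; split; split=> //; apply: le_trans fx _;
    rewrite lee_fin ge_min lexx ?orbT.
have [|p [Kp cl_p]] := cK _ filterB.
  by have [t /andP[ft _]] := ereal_dense fq0; exists t; [exists q0|move=> x []].
exists p => // q Kq; rewrite leNgt; apply/negP => fqp.
have [t /andP[fqt tfp]] := ereal_dense fqp.
have [V Vp fV] := lsc_f p t tfp.
have Dt : D t by exists q.
have [x [[_ fxt] Vx]] := cl_p (B t) V (in_filter_from B Dt) Vp.
by have := fV x Vx; rewrite ltNge fxt.
Qed.

Section SupportN.
Context {R : realType} {n : nat}.
Implicit Types (p q u c : 'rV[R]_n).

Definition dotp p c := \sum_i p 0 i * c 0 i.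

Lemma dotpD p q c : dotp (p + q) c = dotp p c + dotp q c.
Proof. by rewrite /dotp -big_split; apply: eq_bigr => i _; rewrite mxE mulrDl. Qed.

Lemma dotpZ k p c : dotp (k *: p) c = k * dotp p c.
Proof. by rewrite /dotp mulr_sumr; apply: eq_bigr => i _; rewrite mxE mulrA. Qed.

Lemma dotpB p q c : dotp (p - q) c = dotp p c - dotp q c.
Proof. by rewrite dotpD -scaleN1r dotpZ mulN1r. Qed.

Lemma dotp0 c : dotp 0 c = 0.
Proof. by rewrite -(scale0r 0) dotpZ mul0r. Qed.

Lemma dotp_continuous c : continuous (dotp^~ c).
Proof.
have -> : dotp^~ c = \sum_i (fun p : 'rV[R]_n => p 0 i * c 0 i).
  by apply/funext => p; rewrite fct_sumE.
apply: (big_ind (fun f => continuous f)) => [|f g|i _]; first exact: cst_continuous.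
  by move=> cf cg x; apply: continuousD; [exact: cf|exact: cg].
by move=> p; apply: continuousM; [exact: coord_continuous|exact: cst_continuous].
Qed.

Lemma closed_dotp_eq c (a : R) : closed [set p | dotp p c = a].
Proof.
rewrite (_ : [set p | _] = dotp^~ c @^-1` [set x | x = a]) //.
by apply: preimage_closed => [p _|]; [exact: dotp_continuous|exact: closed_eq].
Qed.

Variable C : set 'rV[R]_n.

Definition supportN p := ereal_sup [set (- dotp p c)%:E | c in C].

Lemma supportN_ge p c : C c -> ((- dotp p c)%:E <= supportN p)%E.
Proof. by move=> Cc; apply: ereal_sup_ubound; exists c. Qed.

Lemma supportN_le p (x : \bar R) :
  (forall c, C c -> ((- dotp p c)%:E <= x)%E) -> (supportN p <= x)%E.
Proof. by move=> px; apply: ge_ereal_sup => _ [c Cc <-]; exact: px. Qed.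

Lemma lower_semicontinuous_supportN : lower_semicontinuous supportN.
Proof.
move=> p a /ereal_sup_gt[_ [c Cc <-]]; rewrite lte_fin => acp.
exists [set q | a < - dotp q c].
  apply: open_nbhs_nbhs; split => //.
  rewrite (_ : [set q | a < - dotp q c] = dotp^~ c @^-1` [set x | x < - a]).
    by apply: open_comp => [q _|]; [exact: dotp_continuous|exact: open_lt].
  by apply/seteqP; split => q /=; rewrite ltrNr.
by move=> q /= aqc; apply: lt_le_trans (supportN_ge q Cc); rewrite lte_fin.
Qed.

Lemma closed_supportN_le (x : R) : closed [set p | (supportN p <= x%:E)%E].
Proof.
rewrite (_ : [set p | _] = ~` [set p | (x%:E < supportN p)%E]).
  apply: open_closedC.
  exact: (proj1 (lower_semicontinuousP _) lower_semicontinuous_supportN).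
by apply/seteqP; split => p /=; rewrite leNgt => /negP.
Qed.

Lemma supportN_conv p q (t : R) : 0 <= t <= 1 ->
  (supportN (t *: p + (1 - t) *: q) <= t%:E * supportN p + (1 - t)%:E * supportN q)%E.
Proof.
move=> /andP[t0 t1]; apply: supportN_le => c Cc.
rewrite dotpD !dotpZ opprD -!mulrN EFinD !EFinM.
by apply: leeD; apply: lee_wpmul2l; rewrite ?lee_fin ?subr_ge0 ?supportN_ge.
Qed.

Lemma supportN_scale (a : R) p : 0 <= a ->
  (supportN (a *: p) <= a%:E * supportN p)%E.
Proof.
move=> a0; apply: supportN_le => c Cc.
by rewrite dotpZ -mulrN EFinM lee_wpmul2l ?lee_fin ?supportN_ge.
Qed.
End SupportN.

Lemma norm_bounded_set (R : realType) (V : normedModType R) (A : set V) (M : R) :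
  (forall p, A p -> `|p| <= M) -> bounded_set A.
Proof.
move=> AM; exists M; split => [|N MN p Ap]; first exact: num_real.
by rewrite /= (le_trans (AM _ Ap)) // ltW.
Qed.

Section Hyperplane.
Context {R : realType} {n : nat}.
Variables (C : set 'rV[R]_n) (m : 'rV[R]_n).
Hypothesis Cm : C m.
Local Notation G := (supportN C).

Lemma supportN_gtNy p : (-oo < G p)%E.
Proof. exact: lt_le_trans (ltNyr _) (supportN_ge p Cm). Qed.

Lemma supportN_fin_num p : (G p < +oo)%E -> G p \is a fin_num.
Proof. by rewrite fin_numElt supportN_gtNy. Qed.

Lemma supportN0 : G 0 = 0%E.
Proof.
apply/eqP; rewrite eq_le supportN_le => [|c _]; last by rewrite dotp0 oppr0.
by have := supportN_ge 0 Cm; rewrite dotp0 oppr0.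
Qed.

Hypothesis supportN_gt0 : forall u, dotp u m = 0 -> u != 0 -> (0 < G u)%E.

(* [G] may take the value [+oo], so a bound on [G] over a sublevel set cannot
   come from subadditivity; finitely many elements of [C] are used instead. *)
Lemma supportN_sphere_cover : exists2 cs : seq 'rV[R]_n, {subset cs <= C} &
  exists2 delta : R, 0 < delta & forall u, dotp u m = 0 -> `|u| = 1 ->
    exists2 c, c \in cs & delta <= - dotp u c.
Proof.
pose S := [set u : 'rV[R]_n | dotp u m = 0 /\ `|u| = 1].
have cS : compact S.
  apply: bounded_closed_compact; first by apply: (@norm_bounded_set _ _ _ 1) => u [_ ->].
  apply: closedI; first exact: closed_dotp_eq.
  rewrite (_ : (fun u => _) = (fun u => `|u|) @^-1` [set x : R | x = 1]) //.
  by apply: preimage_closed => [u _|]; [exact: norm_continuous|exact: closed_eq].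
pose D := [set cd : 'rV[R]_n * R | C cd.1 /\ 0 < cd.2].
pose U (cd : 'rV[R]_n * R) := [set u | cd.2 < - dotp u cd.1].
have oU : forall cd, D cd -> open (U cd).
  move=> [c delta] _; rewrite (_ : U _ = dotp^~ c @^-1` [set x | x < - delta]).
    by apply: open_comp => [u _|]; [exact: dotp_continuous|exact: open_lt].
  by apply/seteqP; split => u /=; rewrite ltrNr.
have SU : S `<=` cover D U.
  move=> u [um u1]; have u0 : u != 0 by rewrite -normr_gt0 u1.
  have /ereal_sup_gt[_ [c Cc <-]] := supportN_gt0 um u0; rewrite lte_fin => cu0.
  exists (c, - dotp u c / 2); first by split => //=; rewrite divr_gt0.
  by rewrite /U /= ltr_pdivrMr // ltr_pMr // ltr1n.
move: cS; rewrite compact_cover => /(_ _ D U oU SU)[D' D'D D'U].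
have D'D_cd : forall cd, cd \in D' -> D cd by move=> cd /D'D; rewrite in_setE.
exists [seq cd.1 | cd <- D'].
  by move=> _ /mapP[cd /D'D_cd [Cc _] ->]; rewrite in_setE.
exists (\big[Num.min/1]_(cd <- D') cd.2).
  rewrite big_seq; elim/big_ind: _ => // [s t s0 t0|cd /D'D_cd []//].
  by rewrite lt_min s0.
move=> u um u1; have [cd cdD' /= ucd] := D'U u (conj um u1).
exists cd.1; first exact: map_f.
by apply: le_trans (ltW ucd); exact: ge_bigmin_seq.
Qed.

Lemma bounded_supportN_sublevel nu (x : R) :
  bounded_set [set p | dotp p m = nu /\ (G p <= x%:E)%E].
Proof.
have [[p0 [p0m Gp0]]|] :=
    pselect (exists p, dotp p m = nu /\ (G p <= x%:E)%E); last first.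
  by move=> none; apply: (@norm_bounded_set _ _ _ 0) => p Ap; case: none; exists p.
have [cs csC [delta delta0 cover_cs]] := supportN_sphere_cover.
pose M := \big[Num.max/0]_(c <- cs) dotp p0 c.
apply: (@norm_bounded_set _ _ _ (`|p0| + Num.max 0 ((x + M) / delta))) => p [pm Gp].
rewrite -[p](subrK p0) (le_trans (ler_normD _ _)) // addrC lerD2l.
set w := p - p0; have [->|w0] := eqVneq w 0; first by rewrite normr0 le_max lexx.
have nw : 0 < `|w| by rewrite normr_gt0.
pose u := `|w|^-1 *: w.
have wu : w = `|w| *: u by rewrite /u scalerA mulfV ?gt_eqF // scale1r.
have um : dotp u m = 0 by rewrite dotpZ dotpB pm p0m subrr mulr0.
have u1 : `|u| = 1 by rewrite normrZ normfV normr_id mulVf ?gt_eqF.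
have [c c_cs uc] := cover_cs u um u1.
have Cc : C c by apply/set_mem/csC.
have cM : dotp p0 c <= M by exact: le_bigmax_seq.
have : - dotp p c <= x by rewrite -lee_fin (le_trans (supportN_ge p Cc)).
have -> : p = `|w| *: u + p0 by rewrite -wu subrK.
rewrite dotpD dotpZ => pcx.
rewrite le_max ler_pdivlMr //; apply/orP; right.
have : `|w| * delta <= `|w| * - dotp u c by rewrite ler_wpM2l // ltW.
lra.
Qed.

Definition supportN_argmin nu := [set p | [/\ dotp p m = nu, (G p < +oo)%E &
  forall q, dotp q m = nu -> (G p <= G q)%E]].

Lemma supportN_argmin0 : supportN_argmin 0 = [set 0].
Proof.
apply/seteqP; split => [p [pm _ pmin]|_ ->]; last first.
  split; [exact: dotp0|by rewrite supportN0 ltry|move=> q qm].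
  by rewrite supportN0; have := supportN_ge q Cm; rewrite qm oppr0.
apply/eqP; apply: contraT => p0; have := pmin 0 (dotp0 m).
by rewrite supportN0 leNgt supportN_gt0.
Qed.

Lemma supportN_argmin_compact_convex nu p0 :
  dotp p0 m = nu -> (G p0 < +oo)%E ->
  [/\ supportN_argmin nu !=set0, compact (supportN_argmin nu) &
      convex_set (supportN_argmin nu : set (convex_lmodType 'rV[R]_n))].
Proof.
move=> p0m Gp0.
have compact_sublevel x : compact [set p | dotp p m = nu /\ (G p <= x%:E)%E].
  apply: bounded_closed_compact; first exact: bounded_supportN_sublevel.
  by apply: closedI; [exact: closed_dotp_eq|exact: closed_supportN_le].
have G_fin p : (G p < +oo)%E -> G p = (fine (G p))%:E.
  by move=> /supportN_fin_num/fineK.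
set K := [set p | dotp p m = nu /\ (G p <= (fine (G p0))%:E)%E].
have Kp0 : K p0 by split => //; rewrite -G_fin.
have [ps [psm Gps] ps_minK] :=
  lower_semicontinuous_compact_min (@lower_semicontinuous_supportN _ _ C)
    (compact_sublevel _) (ex_intro _ p0 Kp0).
have ps_min q : dotp q m = nu -> (G ps <= G q)%E.
  move=> qm; have [Gq|/ltW Gq] := leP (G q) (fine (G p0))%:E; first exact: ps_minK.
  exact: le_trans Gps Gq.
have Gps_fin : (G ps < +oo)%E by exact: le_lt_trans Gps (ltry _).
have argminE :
    supportN_argmin nu = [set p | dotp p m = nu /\ (G p <= (fine (G ps))%:E)%E].
  rewrite -G_fin //; apply/seteqP; split => [p [pm _ pmin]|p [pm Gp]].
    by split => //; exact: pmin.
  split => //; first exact: le_lt_trans Gp Gps_fin.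
  by move=> q qm; exact: le_trans Gp (ps_min q qm).
split.
- by exists ps; split.
- by rewrite argminE; exact: compact_sublevel.
- move=> x y l; rewrite !in_setE argminE => -[xm Gx] [ym Gy].
  have -> : conv l x y = l%:num *: x + (1 - l%:num) *: y :> 'rV[R]_n by [].
  split; first by rewrite dotpD !dotpZ xm ym -mulrDl subrKC mul1r.
  apply: le_trans (supportN_conv _ _ _ _) _; first by apply/andP; split.
  rewrite (le_trans (leeD (lee_wpmul2l _ Gx) (lee_wpmul2l _ Gy))) ?lee_fin ?subr_ge0 //.
  by rewrite -mulrDl subrKC mul1r.
Qed.

End Hyperplane.

Section Integrability.
Context {d : measure_display} {T : measurableType d} {R : realType}
  (P : probability T R).
Implicit Types (f g : T -> R).

Lemma isL1_integral f : isL1 P f -> (\int[P]_x (f x)%:E)%E = (\int[P]_x f x)%:E.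
Proof. by move=> [_ fi]; rewrite /Rintegral fineK // integrable_fin_num. Qed.

Lemma isL1_le f g : measurable_fun setT f -> isL1 P g ->
  (forall x, `|f x| <= `|g x|) -> isL1 P f.
Proof.
move=> mf [mg gi] fg; split => //; apply: le_integrable gi => //=.
- exact/measurable_EFinP.
- by move=> x _; rewrite /= lee_fin fg.
Qed.

Lemma isL1_cst (c : R) : isL1 P (cst c).
Proof.
split; first exact: measurable_cst.
by apply: finite_measure_integrable_cst.
Qed.

Lemma isL1D f g : isL1 P f -> isL1 P g -> isL1 P (fun x => f x + g x).
Proof.
move=> [mf fi] [mg gi]; split; first exact: measurable_funD.
by apply: eq_integrable measurableT _ _ _ (integrableD measurableT fi gi) => x _.
Qed.

Lemma isL1Z (k : R) f : isL1 P f -> isL1 P (fun x => k * f x).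
Proof.
move=> [mf fi]; split; first exact: measurable_funM.
by apply: eq_integrable measurableT _ _ _ (integrableZl measurableT k fi) => x _.
Qed.

Lemma isL1B f g : isL1 P f -> isL1 P g -> isL1 P (fun x => f x - g x).
Proof.
move=> fL gL; rewrite (_ : (fun x => _) = fun x => f x + (-1) * g x).
  exact: isL1D fL (isL1Z (-1) gL).
by apply/funext => x; rewrite mulN1r.
Qed.

Lemma isL1_norm f : isL1 P f -> isL1 P (fun x => `|f x|).
Proof.
move=> fL; apply: (isL1_le _ fL) => [|x]; last by rewrite normr_id.
by apply: measurableT_comp => //; case: fL.
Qed.

Lemma isL1_bounded_mul (W X : T -> R) (B : R) : measurable_fun setT W ->
  (forall x, `|W x| <= B) -> isL1 P X -> isL1 P (fun x => W x * X x).
Proof.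
move=> mW WB XL; apply: (isL1_le _ (isL1Z B XL)) => [|x].
  by apply: measurable_funM mW _; case: XL.
by rewrite !normrM ler_wpM2r // (le_trans (WB x)) // ler_norm.
Qed.

Lemma L1_RintegralD f g : isL1 P f -> isL1 P g ->
  \int[P]_x (f x + g x) = \int[P]_x f x + \int[P]_x g x.
Proof. by move=> [_ fi] [_ gi]; rewrite RintegralD. Qed.

Lemma L1_RintegralB f g : isL1 P f -> isL1 P g ->
  \int[P]_x (f x - g x) = \int[P]_x f x - \int[P]_x g x.
Proof. by move=> [_ fi] [_ gi]; rewrite RintegralB. Qed.

Lemma L1_RintegralZ (k : R) f : isL1 P f -> \int[P]_x (k * f x) = k * \int[P]_x f x.
Proof. by move=> [_ fi]; rewrite RintegralZl. Qed.

Lemma Rintegral_cst1 (c : R) : \int[P]_x c = c.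
Proof. by rewrite Rintegral_cst //; have /= -> := probability_setT P; rewrite mulr1. Qed.

Lemma L1_le_Rintegral f g : isL1 P f -> isL1 P g -> (forall x, f x <= g x) ->
  \int[P]_x f x <= \int[P]_x g x.
Proof. by move=> [_ fi] [_ gi] fg; apply: le_Rintegral. Qed.

Lemma L1_Rintegral_sum (I : Type) (s : seq I) (F : I -> T -> R) :
  (forall i, isL1 P (F i)) -> isL1 P (fun x => \sum_(i <- s) F i x) /\
  \int[P]_x (\sum_(i <- s) F i x) = \sum_(i <- s) \int[P]_x F i x.
Proof.
move=> FL; elim: s => [|i s [sL sE]].
  rewrite big_nil (_ : (fun x => _) = cst 0); last by apply/funext => x; rewrite big_nil.
  by split; [exact: isL1_cst|exact: Rintegral_cst1].
rewrite big_cons (_ : (fun x => _) = fun x => F i x + \sum_(j <- s) F j x).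
  by split; [exact: isL1D|rewrite L1_RintegralD // sE].
by apply/funext => x; rewrite big_cons.
Qed.

Lemma L1_Rintegral_ae_eq f g : isL1 P f -> measurable_fun setT g ->
  {ae P, forall x, f x = g x} -> \int[P]_x f x = \int[P]_x g x.
Proof.
move=> [mf _] mg fg; congr fine; apply: ae_eq_integral => //.
- exact/measurable_EFinP.
- exact/measurable_EFinP.
- by apply: filterS fg => x /= -> _.
Qed.

Lemma L1_Rintegral_eq0 f : isL1 P f -> (forall x, 0 <= f x) ->
  \int[P]_x f x = 0 -> {ae P, forall x, f x = 0}.
Proof.
move=> fL f0 int0; have [mf _] := fL.
have : (\int[P]_x `|(f x)%:E|)%E = 0%E.
  under eq_integral do rewrite gee0_abs ?lee_fin ?f0 //.
  by rewrite isL1_integral // int0.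
move/(ae_eq_integral_abs _ measurableT (proj2 (measurable_EFinP _ _) mf)).
by apply: filterS => x /(_ I) [].
Qed.

End Integrability.

Lemma normr_max0 (R : realType) (a : R) : `|Num.max a 0| <= `|a|.
Proof. by case: (lerP 0 a); rewrite ?normr0. Qed.

Lemma max0_subN (R : realType) (a : R) : Num.max a 0 - Num.max (- a) 0 = a.
Proof.
case: (lerP 0 a) => a0; first by rewrite max_r ?subr0 // oppr_le0.
by rewrite max_l ?sub0r ?opprK // oppr_ge0 ltW.
Qed.

Section Expectation.
Context {d : measure_display} {T : measurableType d} {R : realType}
  (P : probability T R).
Implicit Types (f g X Z : T -> R).

Lemma EnegZX_L1 Z X : measurable_fun setT Z -> measurable_fun setT X ->
  isL1 P (fun x => Z x * X x) -> EnegZX P Z X = (- \int[P]_x (Z x * X x))%:E.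
Proof.
move=> mZ mX ZXL.
have partL (Y : T -> R) : measurable_fun setT Y -> (forall x, `|Y x| = `|X x|) ->
    isL1 P (fun x => Z x * Num.max (Y x) 0).
  move=> mY YX; apply: isL1_le ZXL _ => [|x].
    by apply: measurable_funM => //; exact: measurable_maxr.
  by rewrite !normrM ler_wpM2l // -YX normr_max0.
have negL := partL _ (measurable_funN mX) (fun x => normrN (X x)).
have posL := partL _ mX (fun x => erefl).
rewrite /EnegZX !isL1_integral //= -EFinB -L1_RintegralB //.
congr EFin; rewrite -[RHS]mulN1r -L1_RintegralZ //.
by apply: eq_Rintegral => x _; rewrite -mulrBr -opprB max0_subN mulN1r mulrN.
Qed.

Lemma L1_ae_eq_cst_of_ge X (mu : R) : isL1 P X ->
  {ae P, forall x, mu <= X x} -> \int[P]_x X x = mu -> {ae P, forall x, X x = mu}.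
Proof.
move=> XL Xmu EX.
have XmuL : isL1 P (fun x => X x - mu) by exact: isL1B XL (isL1_cst P mu).
pose h x := Num.max (X x - mu) 0.
have mh : measurable_fun setT h by apply: measurable_maxr => //; case: XmuL.
have hL : isL1 P h by apply: isL1_le mh XmuL _ => x; exact: normr_max0.
have h_ae : {ae P, forall x, X x - mu = h x}.
  by apply: filterS Xmu => x muX; rewrite /h max_l // subr_ge0.
have Eh0 : \int[P]_x h x = 0.
  rewrite -(L1_Rintegral_ae_eq XmuL mh h_ae) L1_RintegralB //; last exact: isL1_cst.
  by rewrite Rintegral_cst1 EX subrr.
have h0 : forall x, 0 <= h x by move=> x; rewrite /h le_max lexx orbT.
apply: filterS2 h_ae (L1_Rintegral_eq0 hL h0 Eh0) => x Xh hx0.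
by apply/eqP; rewrite -subr_eq0 Xh hx0.
Qed.

Lemma Rintegral_min1_mul_gt0 g : isL1 P g -> (forall x, 0 <= g x) ->
  ~ {ae P, forall x, g x = 0} -> 0 < \int[P]_x (Num.min (g x) 1 * g x).
Proof.
move=> gL g0 g_not0; have [mg _] := gL.
have kg0 x : 0 <= Num.min (g x) 1 * g x by rewrite mulr_ge0 // le_min g0 ler01.
rewrite lt_def Rintegral_ge0 ?andbT //; apply/eqP => int0; apply: g_not0.
have kgL : isL1 P (fun x => Num.min (g x) 1 * g x).
  apply: (isL1_bounded_mul (B := 1)) gL => [|x]; first exact: measurable_minr.
  by rewrite ger0_norm ?le_min ?g0 ?ler01 // ge_min lexx orbT.
apply: filterS (L1_Rintegral_eq0 kgL kg0 int0) => x.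
by case: (leP (g x) 1) => _ /eqP; rewrite ?mul1r ?mulf_eq0 ?orbb => /eqP.
Qed.

Lemma tilted_density (k X : T -> R) : measurable_fun setT k ->
  (forall x, 0 <= k x <= 1) -> isL1 P X ->
  exists Z, [/\ measurable_fun setT Z, (forall x, 0 <= Z x <= 2),
    \int[P]_x Z x = 1 &
    \int[P]_x (Z x * X x) =
      \int[P]_x X x + 2^-1 * \int[P]_x (k x * (X x - \int[P]_x X x))].
Proof.
move=> mk k01 XL; set mu := \int[P]_x X x; set ek := \int[P]_x k x.
have kL : isL1 P k.
  apply: isL1_le mk (isL1_cst P 1) _ => x.
  by have /andP[? ?] := k01 x; rewrite /= normr1 ger0_norm.
have ek01 : 0 <= ek <= 1.
  rewrite Rintegral_ge0 => [|x _]; last by have /andP[] := k01 x.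
  rewrite -[leRHS](Rintegral_cst1 P 1) L1_le_Rintegral //; first exact: isL1_cst.
  by move=> x; have /andP[] := k01 x.
have kXL : isL1 P (fun x => k x * (X x - mu)).
  apply: (isL1_bounded_mul (B := 1)) mk _ (isL1B XL (isL1_cst P mu)) => x.
  by have /andP[? ?] := k01 x; rewrite ger0_norm.
have kekL : isL1 P (fun x => k x - ek) by apply: isL1B; last exact: isL1_cst.
pose Z x := 1 + 2^-1 * (k x - ek).
exists Z; split.
- apply: measurable_funD => //; apply: measurable_funM => //.
  exact: measurable_funB.
- move=> x; move: (k01 x) ek01 => /andP[? ?] /andP[? ?].
  by apply/andP; split; rewrite /Z; lra.
- rewrite L1_RintegralD ?L1_RintegralZ ?L1_RintegralB ?Rintegral_cst1 //;
    last exact: isL1Z.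
  + by rewrite /ek subrr mulr0 addr0.
  + exact: isL1_cst.
  + exact: isL1_cst.
- rewrite (_ : (fun x => Z x * X x) =
      fun x => X x + 2^-1 * (k x * (X x - mu) + (mu * k x + - ek * X x))); last first.
    by apply/funext => x; rewrite /Z; ring.
  rewrite !L1_RintegralD ?L1_RintegralZ ?L1_RintegralD ?L1_RintegralZ //.
  + by rewrite -/mu -/ek; ring.
  all: by do ?[apply: isL1D|apply: isL1B|apply: isL1Z].
Qed.

Lemma density_below_mean X : isL1 P X -> ~ (exists c, aeeq P X (cst c)) ->
  exists Z, [/\ measurable_fun setT Z, (forall x, 0 <= Z x <= 2),
    \int[P]_x Z x = 1 & \int[P]_x (Z x * X x) < \int[P]_x X x].
Proof.
move=> XL Xnc; have [mX _] := XL; set mu := \int[P]_x X x.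
pose g x := Num.max (mu - X x) 0.
have mg : measurable_fun setT g by apply: measurable_maxr => //; exact: measurable_funB.
have g0 x : 0 <= g x by rewrite /g le_max lexx orbT.
have gL : isL1 P g.
  by apply: isL1_le mg (isL1B (isL1_cst P mu) XL) _ => x; exact: normr_max0.
pose k x := Num.min (g x) 1.
have mk : measurable_fun setT k by exact: measurable_minr.
have k01 x : 0 <= k x <= 1 by rewrite le_min g0 ler01 ge_min lexx orbT.
have [Z [mZ Z02 EZ EZX]] := tilted_density mk k01 XL.
exists Z; split => //; rewrite EZX gtrDl pmulr_rlt0 // -/mu.
rewrite (_ : (fun x => _) = fun x => -1 * (k x * g x)); last first.
  apply/funext => x; rewrite /k /g mulN1r; case: (lerP 0 (mu - X x)) => _.
    by rewrite -[X x - mu]opprB mulrN.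
  by rewrite minEle ler01 mul0r mulr0 oppr0.
have kgL : isL1 P (fun x => k x * g x).
  apply: (isL1_bounded_mul (B := 1)) mk _ gL => x.
  by have /andP[? ?] := k01 x; rewrite ger0_norm.
rewrite L1_RintegralZ // mulN1r oppr_lt0; apply: Rintegral_min1_mul_gt0 => // g_ae0.
apply: Xnc; exists mu; apply: (L1_ae_eq_cst_of_ge XL) => //.
by apply: filterS g_ae0 => x gx0; rewrite -subr_le0 -gx0 /g le_max lexx.
Qed.

Section StrictBound.
Variables (Q Qt : set (T -> R)).
Hypotheses (QA : Q_admissible P Q) (INT : cond_INT P Q Qt) (Qt1 : Qt (cst 1)).

Lemma admissible_near_density Z (B eps : R) : measurable_fun setT Z ->
  (forall x, 0 <= Z x <= B) -> \int[P]_x Z x = 1 -> 0 < eps ->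
  exists W : T -> R, exists2 l : R, 0 < l < 1 & [/\ measurable_fun setT W,
    (forall x, `|W x - Z x| <= eps) & Q (fun x => l * W x + (1 - l) * cst 1 x)].
Proof.
move=> mZ Z0B EZ eps0.
have ZB x : `|Z x| <= B by have /andP[Z0 ?] := Z0B x; rewrite ger0_norm.
have ZL : isL1 P Z.
  by apply: isL1_le mZ (isL1_cst P B) _ => x; rewrite (le_trans (ZB x)) // ler_norm.
have DZ : Dset P Z.
  split => //; first by apply: aeW => x; have /andP[] := Z0B x.
  by rewrite /mean isL1_integral // EZ.
have LZ : isLinf P Z by split => //; exists B; exact: aeW.
have [E [ED Edense Emix]] := INT Qt1.
have [Z' EZ' ZZ'] := Edense Z DZ LZ eps eps0.
have [[[mZ' _] _ _] _] := ED Z' EZ'.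
have [l l01 QZ'] := Emix Z' EZ'.
(* [W] equals [Z'] almost surely but is [eps]-close to [Z] everywhere. *)
pose W x := if `|Z x - Z' x| <= eps then Z' x else Z x.
have mW : measurable_fun setT W.
  apply: measurable_fun_ifT => //; apply: measurable_fun_ler => //.
  by apply: measurableT_comp => //; exact: measurable_funB.
exists W, l => //; split => // [x|].
  by rewrite /W; case: ifP => [|_]; [rewrite distrC|rewrite subrr normr0 ltW].
have [satQ _ _ _] := QA; apply: satQ QZ' _ _.
  by apply: measurable_funD => //; apply: measurable_funM.
by apply: filterS ZZ' => x Zx; rewrite /W Zx.
Qed.

Lemma admissible_below_mean X Z (B : R) : isL1 P X -> measurable_fun setT Z ->
  (forall x, 0 <= Z x <= B) -> \int[P]_x Z x = 1 ->
  \int[P]_x (Z x * X x) < \int[P]_x X x ->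
  exists2 Zq, Q Zq & [/\ measurable_fun setT Zq, isL1 P (fun x => Zq x * X x) &
    \int[P]_x (Zq x * X x) < \int[P]_x X x].
Proof.
move=> XL mZ Z0B EZ ZXmu; set mu := \int[P]_x X x.
have ZB x : `|Z x| <= B by have /andP[Z0 ?] := Z0B x; rewrite ger0_norm.
have ZXL : isL1 P (fun x => Z x * X x) by exact: isL1_bounded_mul mZ ZB XL.
set kap := mu - \int[P]_x (Z x * X x); set ax := \int[P]_x `|X x|.
have kap0 : 0 < kap by rewrite subr_gt0.
have ax0 : 0 <= ax by apply: Rintegral_ge0.
set eps := kap / (ax + 1).
have eps0 : 0 < eps by rewrite divr_gt0 // ltr_wpDl.
have epsax : eps * ax < kap.
  rewrite -[ltRHS](mulfVK (_ : ax + 1 != 0)) ?gt_eqF ?ltr_wpDl // -/eps.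
  by rewrite ltr_pM2l // ltrDl.
have [W [l /andP[l0 l1] [mW WZ QWl]]] := admissible_near_density mZ Z0B EZ eps0.
have WB x : `|W x| <= B + eps.
  by rewrite -[W x](subrK (Z x)) (le_trans (ler_normD _ _)) // addrC lerD.
have WXL : isL1 P (fun x => W x * X x) by exact: isL1_bounded_mul mW WB XL.
have EWX : \int[P]_x (W x * X x) <= \int[P]_x (Z x * X x) + eps * ax.
  have epsXL : isL1 P (fun x => eps * `|X x|) by exact/isL1Z/isL1_norm.
  apply: le_trans (L1_le_Rintegral WXL (isL1D ZXL epsXL) _) _ => [x|].
    rewrite -lerBlDl -mulrBl (le_trans (ler_norm _)) // normrM ler_wpM2r //.
  by rewrite (L1_RintegralD ZXL epsXL) L1_RintegralZ //; exact: isL1_norm.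
exists (fun x => l * W x + (1 - l) * cst 1 x) => //.
rewrite (_ : (fun x => (l * W x + (1 - l) * cst 1 x) * X x) =
    fun x => l * (W x * X x) + (1 - l) * X x); last first.
  by apply/funext => x; rewrite /= mulr1 mulrDl mulrA.
split.
- by apply: measurable_funD => //; apply: measurable_funM.
- by apply: isL1D; exact: isL1Z.
- rewrite L1_RintegralD ?L1_RintegralZ //; [|exact: isL1Z..].
  have : l * \int[P]_x (W x * X x) < l * mu.
    by rewrite ltr_pM2l //; move: epsax; rewrite /kap; lra.
  by rewrite /mu; lra.
Qed.

Lemma rho_gt_neg_mean X : isL1 P X -> ~ (exists c, aeeq P X (cst c)) ->
  (- mean P X < rho P Q X)%E.
Proof.
move=> XL Xnc; have [mX _] := XL.
have [Z [mZ Z02 EZ ZX]] := density_below_mean XL Xnc.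
have [Zq QZq [mZq ZqXL ZqX]] := admissible_below_mean XL mZ Z02 EZ ZX.
apply: (@lt_le_trans _ _ (EnegZX P Zq X)); last by apply: ereal_sup_ubound; exists Zq.
by rewrite EnegZX_L1 // /mean isL1_integral // lte_fin ltrN2.
Qed.

End StrictBound.
End Expectation.

Section Market.
Context {d : measure_display} {T : measurableType d} {R : realType}
  (P : probability T R).
Variables (n : nat) (r : R) (S0 : 'I_n -> R) (S1 : 'I_n -> T -> R).
Local Notation Ret := (Ret S0 S1).
Local Notation Xpi := (Xpi r S0 S1).

Definition excess_moment (Z : T -> R) : 'rV[R]_n :=
  \row_i \int[P]_x (Z x * (Ret i x - r)).

Lemma Xpi_moment Z p : isL1 P Z -> (forall i, isL1 P (fun x => Z x * Ret i x)) ->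
  isL1 P (fun x => Z x * Xpi p x) /\
  \int[P]_x (Z x * Xpi p x) = dotp p (excess_moment Z).
Proof.
move=> ZL ZRL.
have ZRrL i : isL1 P (fun x => Z x * (Ret i x - r)).
  rewrite (_ : (fun x => _) = fun x => Z x * Ret i x - r * Z x).
    by apply: isL1B; [exact: ZRL|exact: isL1Z ZL].
  by apply/funext => x; rewrite mulrBr (mulrC r).
have termL i : isL1 P (fun x => p 0 i * (Z x * (Ret i x - r))) by exact: isL1Z.
have [sumL sumE] := L1_Rintegral_sum (index_enum 'I_n) termL.
rewrite (_ : (fun x => _) =
    fun x => \sum_(i <- index_enum 'I_n) p 0 i * (Z x * (Ret i x - r))).
  split => //; rewrite sumE; apply: eq_bigr => i _; rewrite mxE L1_RintegralZ //.
by apply/funext => x; rewrite /Xpi mulr_sumr; apply: eq_bigr => i _; rewrite mulrCA.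
Qed.

Lemma Xpi_ae_eq0 u : market_assumptions P r S0 S1 ->
  {ae P, forall x, Xpi u x = 0} -> u = 0.
Proof.
move=> [_ [S0_gt0 _ nonredundant _ _]] Xu0.
pose th0 := - \sum_i u 0 i.
pose th : 'rV[R]_n := \row_i (u 0 i / S0 i).
have thS0 : th0 * 1 + \sum_i th 0 i * S0 i = 0.
  have -> : \sum_i th 0 i * S0 i = \sum_i u 0 i.
    by apply: eq_bigr => i _; rewrite mxE divfK ?gt_eqF.
  by rewrite mulr1 addNr.
have thS1 : {ae P, forall x, th0 * (1 + r) + \sum_i th 0 i * S1 i x = 0}.
  apply: filterS Xu0 => x Xux; rewrite -[RHS]Xux.
  rewrite /Xpi /th0 mulNr mulr_suml -sumrN -big_split /=; apply: eq_bigr => i _.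
  by rewrite mxE /Ret; field; rewrite gt_eqF.
have [_ th_eq0] := nonredundant th0 th thS0 thS1.
apply/matrixP => a i; rewrite ord1 mxE.
have /matrixP/(_ 0 i)/eqP := th_eq0; rewrite !mxE mulf_eq0 invr_eq0.
by rewrite (gt_eqF (S0_gt0 i)) orbF => /eqP.
Qed.

Hypothesis Ret_L1 : forall i, isL1 P (Ret i).

Lemma Xpi_L1_mean p : isL1 P (Xpi p) /\
  mean P (Xpi p) = (dotp p (excess_moment (cst 1)))%:E.
Proof.
have RL1 i : isL1 P (fun x => cst 1 x * Ret i x).
  by rewrite (_ : (fun x => _) = Ret i) //; apply/funext => x; rewrite mul1r.
have [] := Xpi_moment p (isL1_cst P 1) RL1.
rewrite (_ : (fun x => _) = Xpi p); last by apply/funext => x; rewrite mul1r.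
by move=> XL XE; split => //; rewrite /mean isL1_integral // XE.
Qed.

Lemma rho_Xpi Q p : Q_admissible P Q -> cond_I P S0 S1 Q ->
  rho P Q (Xpi p) = supportN [set excess_moment Z | Z in Q] p.
Proof.
move=> [_ QD _ _] CI.
have EnegE Z : Q Z -> EnegZX P Z (Xpi p) = (- dotp p (excess_moment Z))%:E.
  move=> QZ; have [ZL _ _] := QD Z QZ; have [[mX _] _] := Xpi_L1_mean p.
  have [ZXL <-] := Xpi_moment p ZL (fun i => CI i Z QZ).
  by rewrite EnegZX_L1 //; case: ZL.
rewrite /rho /supportN; congr ereal_sup; apply/seteqP; split.
  by move=> _ [Z QZ <-]; exists (excess_moment Z); [exists Z|rewrite EnegE].
by move=> _ [_ [Z QZ <-] <-]; exists Z => //; rewrite EnegE.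
Qed.

Section Admissible.
Variables (Q Qt : set (T -> R)).
Hypotheses (QA : Q_admissible P Q) (CI : cond_I P S0 S1 Q).
Local Notation C := [set excess_moment Z | Z in Q].
Local Notation m := (excess_moment (cst 1)).

Lemma excess_moment1_in : C m.
Proof. by exists (cst 1) => //; case: QA. Qed.

Lemma Pi_nu_dotp nu p : Pi_nu P r S0 S1 nu p <-> dotp p m = nu.
Proof. by rewrite /Pi_nu /= (Xpi_L1_mean p).2; split => [[]|->]. Qed.

Lemma Pi_rho_argmin nu : Pi_rho P r S0 S1 Q nu = supportN_argmin C m nu.
Proof.
apply/seteqP; split => p [/Pi_nu_dotp pm pfin pmin]; split => //.
- by rewrite -rho_Xpi.
- by move=> q qm; rewrite -!rho_Xpi //; apply: pmin; exact/Pi_nu_dotp.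
- by rewrite rho_Xpi.
- by move=> q /Pi_nu_dotp qm; rewrite !rho_Xpi //; exact: pmin.
Qed.

Lemma supportN_excess_gt0 : market_assumptions P r S0 S1 ->
  cond_INT P Q Qt -> Qt (cst 1) ->
  forall u, dotp u m = 0 -> u != 0 -> (0 < supportN C u)%E.
Proof.
move=> mkt INT Qt1 u um u0; have [XL Xmean] := Xpi_L1_mean u.
rewrite -rho_Xpi //; apply: le_lt_trans (rho_gt_neg_mean QA INT Qt1 XL _).
  by rewrite Xmean um oppe0.
move=> -[c Xc]; move/negP: u0; apply; apply/eqP.
have c0 : c = 0.
  move: Xmean; rewrite /mean isL1_integral // um.
  by rewrite (L1_Rintegral_ae_eq XL (measurable_cst c) Xc) Rintegral_cst1 => -[].
by apply: Xpi_ae_eq0 mkt _; apply: filterS Xc => x ->; rewrite c0.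
Qed.

End Admissible.
End Market.

Theorem proposition4p11 (d : measure_display) (T : measurableType d)
  (R : realType) (P : probability T R)
  (n : nat) (r : R) (S0 : 'I_n -> R) (S1 : 'I_n -> T -> R)
  (L Q Qt : set (T -> R)) :
  market_assumptions P r S0 S1 ->
  riesz_between P L ->
  (forall pi : 'rV[R]_n, L (Xpi r S0 S1 pi)) ->
  Q_admissible P Q ->
  cond_I P S0 S1 Q ->
  ae_saturated P Qt ->
  Qt `<=` Q ->
  cond_POS P Qt ->
  cond_INT P Q Qt ->
  Qt (cst 1) ->
  [/\ strictly_expectation_bounded P L Q,
      Pi_rho P r S0 S1 Q 0 = [set 0] &
      ((rho_nu P r S0 S1 Q 1 < +oo)%E ->
        forall nu : R, 0 <= nu ->
          [/\ Pi_rho P r S0 S1 Q nu !=set0,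
              compact (Pi_rho P r S0 S1 Q nu) &
              convex_set (Pi_rho P r S0 S1 Q nu : set (convex_lmodType 'rV[R]_n))])].
Proof.
move=> mkt [_ [_ _ _ _ L_L1]] _ QA CI _ _ _ INT Qt1.
have [_ [_ _ _ Ret_L1 _]] := mkt.
have Cm := excess_moment1_in r S0 S1 QA.
have supportN_gt0 := supportN_excess_gt0 Ret_L1 QA CI mkt INT Qt1.
split.
- by move=> X LX; have := rho_gt_neg_mean QA INT Qt1 (L_L1 X LX).
- by rewrite (Pi_rho_argmin r Ret_L1 QA CI) supportN_argmin0.
- move=> rho1 nu nu0; rewrite (Pi_rho_argmin r Ret_L1 QA CI).
  have [_ [p1 /(Pi_nu_dotp _ Ret_L1) p1m <-] rho_p1] := ereal_inf_lt rho1.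
  apply: (supportN_argmin_compact_convex Cm supportN_gt0 (p0 := nu *: p1)).
    by rewrite dotpZ p1m mulr1.
  rewrite (rho_Xpi r Ret_L1 _ QA CI) in rho_p1.
  apply: le_lt_trans (supportN_scale _ _ nu0) _.
  by have /fineK <- := supportN_fin_num Cm rho_p1; rewrite -EFinM ltry.
Qed.
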